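(* Let $(G,k)$ be an instance of PITVD and let $x$ be a vertex such that there are $\ell\ge4$ distinct pendant trees $C_1,\dots,C_\ell$ attached to $x$. Let $Z=\bigcup_{j=4}^{\ell}C_j$. Then $(G,k)$ is a yes-instance of PITVD if and only if $(G-Z,k)$ is a yes-instance of PITVD.
   Context: PITVD: the input is an undirected multigraph $G$ (no self-loops) and an integer $k$; the question is whether there exists $X\subseteq V(G)$ with $|X|\le k$ such that $G-X$ is a simple graph and every connected component of $G-X$ is a proper interval graph or a tree. If $x$ is a cut vertex of $G$ and $C$ is a connected component of $G-x$ that is a tree such that $C\cup\{x\}$ induces a tree in $G$, then $C$ is called a pendant tree attached to $x$. *)

From mathcomp Require Import all_boot all_order all_algebra.
Set Implicit Arguments. Unset Strict Implicit. Unset Printing Implicit Defensive.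
Import Order.TTheory GRing.Theory Num.Theory.

(* A finite undirected multigraph on the vertex type T is given by an
   edge-multiplicity function m : T -> T -> nat (symmetric, zero diagonal =
   no self-loops).  Graphs are considered together with a vertex set
   V : {set T}; the induced sub(multi)graph on S uses the same m restricted
   to S. *)

Section Defs.
Variable T : finType.
Variable m : T -> T -> nat.

Definition adj (y z : T) : bool := 0 < m y z.

Definition relIn (S : {set T}) : rel T :=
  [rel y z | [&& y \in S, z \in S & adj y z]].

Definition connectedIn (S : {set T}) : bool :=
  [forall u in S, forall v in S, connect (relIn S) u v].

Definition simpleIn (S : {set T}) : Prop :=
  forall y z, y \in S -> z \in S -> m y z <= 1.

Definition component (S C : {set T}) : bool :=
  [&& C \subset S, C != set0, connectedIn C &
      [forall y in C, forall z in S, adj y z ==> (z \in C)]].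

Definition ncomp (S : {set T}) : nat := #|[set C : {set T} | component S C]|.

Definition acyclicIn (S : {set T}) : Prop :=
  ~ exists s : seq T,
      [/\ uniq s, 2 < size s, all (fun v => v \in S) s & cycle (relIn S) s].

Definition treeIn (S : {set T}) : Prop :=
  [/\ S != set0, simpleIn S, connectedIn S & acyclicIn S].

Definition proper_intervalIn (S : {set T}) : Prop :=
  simpleIn S /\
  exists l r : T -> rat,
    [/\ (forall v, v \in S -> (l v <= r v)%R),
        (forall u v, u \in S -> v \in S -> u != v ->
           (adj u v <-> ((l u <= r v)%R /\ (l v <= r u)%R))) &
        (forall u v, u \in S -> v \in S ->
           ~ [/\ (l u <= l v)%R, (r v <= r u)%R & ((l u < l v)%R \/ (r v < r u)%R)])].

Definition cut_vertex (V : {set T}) (x : T) : Prop :=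
  x \in V /\ ncomp V < ncomp (V :\ x).

Definition pendant_tree (V : {set T}) (x : T) (C : {set T}) : Prop :=
  [/\ cut_vertex V x, component (V :\ x) C, treeIn C & treeIn (x |: C)].

Definition PITVD (V : {set T}) (k : nat) : Prop :=
  exists X : {set T},
    [/\ X \subset V, #|X| <= k, simpleIn (V :\: X) &
        forall C, component (V :\: X) C -> proper_intervalIn C \/ treeIn C].

End Defs.

From mathcomp Require Import all_boot all_order all_algebra.
From mathcomp Require Import lra.
Set Implicit Arguments. Unset Strict Implicit. Unset Printing Implicit Defensive.
Import Order.TTheory GRing.Theory Num.Theory.

(* Restricting a solution of G to G - Z solves G - Z. Conversely, let X solve
   G - Z and let C1, C2, C3 be pendant trees at x that survive in G - Z.
   If X contains x or meets C1, C2 or C3, then x |: (X :\: (C1 :|: C2 :|: C3))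
   is no larger than X, and every component of G minus it lies inside a
   pendant tree or inside a component of G - Z - X. Otherwise x and one
   neighbour in each Ci form a claw in the component of x in G - Z - X, so that
   component is a tree and not a proper interval graph; gluing back the
   pendant trees of Z at x keeps it a tree, because a cycle meeting a pendant
   tree stays inside that tree and x. *)

Section IntervalClaw.
Local Open Scope ring_scope.

Lemma not_le_and_le (a b c d : rat) : ~ (a <= b /\ c <= d) -> b < a \/ d < c.
Proof.
move=> nle; case: (leP a b) => [ab|]; last by left.
by case: (leP c d) => [cd|]; [case: nle | right].
Qed.

(* The middle one of three pairwise disjoint intervals meeting [lx, rx] is
   properly contained in it. *)
Lemma interval_claw (lx rx l1 r1 l2 r2 l3 r3 : rat) :
  l1 <= r1 -> l2 <= r2 -> l3 <= r3 ->
  lx <= r1 -> l1 <= rx -> lx <= r2 -> l2 <= rx -> lx <= r3 -> l3 <= rx ->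
  ~ (l1 <= r2 /\ l2 <= r1) -> ~ (l1 <= r3 /\ l3 <= r1) -> ~ (l2 <= r3 /\ l3 <= r2) ->
  ~ [/\ lx <= l1, r1 <= rx & (lx < l1 \/ r1 < rx)] ->
  ~ [/\ lx <= l2, r2 <= rx & (lx < l2 \/ r2 < rx)] ->
  ~ [/\ lx <= l3, r3 <= rx & (lx < l3 \/ r3 < rx)] -> False.
Proof.
move=> ? ? ? ? ? ? ? ? ?.
move=> /not_le_and_le d12 /not_le_and_le d13 /not_le_and_le d23 n1 n2 n3.
case: d12 => ?; case: d13 => ?; case: d23 => ?;
first [ lra | (apply: n1; split; [lra|lra|left; lra])
            | (apply: n2; split; [lra|lra|left; lra])
            | (apply: n3; split; [lra|lra|left; lra]) ].
Qed.

End IntervalClaw.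

Section Graphs.
Variables (T : finType) (m : T -> T -> nat).
Hypothesis msym : forall y z, m y z = m z y.
Hypothesis mloop : forall y, m y y = 0.
Implicit Types (A B C S D K U V X Y : {set T}) (k : nat) (a b u v w x y z : T).

Local Notation adj := (adj m).
Local Notation relIn := (relIn m).
Local Notation connectedIn := (connectedIn m).
Local Notation simpleIn := (simpleIn m).
Local Notation component := (component m).
Local Notation treeIn := (treeIn m).
Local Notation proper_intervalIn := (proper_intervalIn m).
Local Notation pendant_tree := (pendant_tree m [set: T]).

Definition closedIn S K := forall y z, y \in K -> z \in S -> adj y z -> z \in K.

Definition pi_or_tree_components S :=
  forall D, component S D -> proper_intervalIn D \/ treeIn D.

Lemma adjC y z : adj y z = adj z y.
Proof. by rewrite /adj msym. Qed.

Lemma adj_neq y z : adj y z -> y != z.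
Proof. by apply: contraTneq => ->; rewrite /adj mloop. Qed.

Lemma relInC S : symmetric (relIn S).
Proof. by move=> y z; rewrite /relIn /= adjC andbCA. Qed.

Lemma relIn_sub D S : D \subset S -> subrel (relIn D) (relIn S).
Proof.
by move=> /subsetP DS y z /and3P[/DS yS /DS zS yz]; rewrite /relIn /= yS zS.
Qed.

Lemma component_closed S K : component S K -> closedIn S K.
Proof.
by case/and4P=> _ _ _ /forall_inP cK y z /cK/forall_inP/(_ z) cKy /cKy/implyP.
Qed.

Lemma connect_closed S D K u v : D \subset S -> closedIn S K -> u \in K ->
  connect (relIn D) u v -> v \in K.
Proof.
move=> /subsetP DS cK uK /connectP[p]; elim: p u uK => [|w p IHp] u uK /=.
  by move=> _ ->.
by case/andP=> /and3P[_ /DS wS uw]; apply: IHp; apply: cK uw.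
Qed.

Lemma connected_sub_closed S D K u : D \subset S -> closedIn S K ->
  connectedIn D -> u \in D -> u \in K -> D \subset K.
Proof.
move=> DS cK /forall_inP cD uD uK; apply/subsetP=> v vD.
by apply: connect_closed DS cK uK _; move/forall_inP: (cD u uD); apply.
Qed.

Lemma component_eq S K1 K2 v : component S K1 -> component S K2 ->
  v \in K1 -> v \in K2 -> K1 = K2.
Proof.
move=> cK1 cK2 v1 v2.
have /and4P[S1 _ con1 _] := cK1; have /and4P[S2 _ con2 _] := cK2.
apply/eqP; rewrite eqEsubset.
by rewrite (connected_sub_closed S1 (component_closed cK2) con1 v1 v2)
           (connected_sub_closed S2 (component_closed cK1) con2 v2 v1).
Qed.

Lemma component_of_connected S D v : D \subset S -> connectedIn D -> v \in D ->
  exists2 K, component S K & D \subset K.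
Proof.
move=> DS /forall_inP conD vD; have vS := subsetP DS v vD.
pose K := [set w | connect (relIn S) v w].
have KS : K \subset S.
  by apply/subsetP=> w; rewrite inE; apply: connect_closed vS.
have vK w : w \in K -> connect (relIn K) v w.
  rewrite inE => /connectP[p pS ->]; apply/connectP; exists p => //.
  have pK : all [in K] (v :: p).
    by apply/allP=> w' /(path_connect pS) vw'; rewrite inE.
  apply: (sub_in_path (P := [in K])) pK pS => y z yK zK /and3P[_ _ yz].
  by rewrite /relIn /= yK zK.
have symK := sym_connect_sym (relInC K).
exists K.
  apply/and4P; split => //.
  - by apply/set0Pn; exists v; rewrite inE connect0.
  - apply/forall_inP=> u uK; apply/forall_inP=> w wK.
    by apply: connect_trans (vK w wK); rewrite symK vK.
  - apply/forall_inP=> y; rewrite inE => vy; apply/forall_inP=> z zS.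
    apply/implyP=> yz; rewrite inE (connect_trans vy) // connect1 //.
    by rewrite /relIn /= zS yz (subsetP KS) // inE.
apply/subsetP=> u uD; rewrite inE.
have /forall_inP/(_ u uD) := conD v vD.
by apply: connect_sub => y z /(relIn_sub DS); apply: connect1.
Qed.

Lemma simpleIn_sub S D : D \subset S -> simpleIn S -> simpleIn D.
Proof. by move=> /subsetP DS sS y z /DS yS /DS zS; apply: sS. Qed.

Lemma treeIn_sub K D : treeIn K -> D \subset K -> D != set0 -> connectedIn D ->
  treeIn D.
Proof.
move=> [_ sK _ aK] DK D0 cD; split => //; first exact: simpleIn_sub sK.
case=> s [us ss /allP sD cs]; apply: aK; exists s; split => //.
  by apply/allP=> v /sD /(subsetP DK).
exact: sub_cycle (relIn_sub DK) _ cs.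
Qed.

Lemma proper_intervalIn_sub K D : proper_intervalIn K -> D \subset K ->
  proper_intervalIn D.
Proof.
move=> [sK [l [r [lr adjI nest]]]] /subsetP DK.
split; first exact: simpleIn_sub (introT subsetP DK) sK.
exists l, r; split=> [v /DK|u v /DK uK /DK vK|u v /DK uK /DK vK]; auto.
Qed.

Lemma pi_or_tree_connected S D : pi_or_tree_components S -> D \subset S ->
  D != set0 -> connectedIn D -> proper_intervalIn D \/ treeIn D.
Proof.
move=> goodS DS /set0Pn[v vD] cD.
have [K cK DK] := component_of_connected DS cD vD.
have D0 : D != set0 by apply/set0Pn; exists v.
case: (goodS K cK) => [piK|tK]; first by left; apply: proper_intervalIn_sub DK.
by right; apply: treeIn_sub DK D0 cD.
Qed.

Lemma pi_or_tree_componentsS S S' : S' \subset S ->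
  pi_or_tree_components S -> pi_or_tree_components S'.
Proof.
move=> S'S goodS D /and4P[DS' D0 cD _].
exact: pi_or_tree_connected goodS (subset_trans DS' S'S) D0 cD.
Qed.

Lemma PITVD_sub V S k : S \subset V -> PITVD m V k -> PITVD m S k.
Proof.
move=> SV [X [_ Xk sX goodX]].
have sub : S :\: (X :&: S) \subset V :\: X by rewrite setDIr setDv setU0 setSD.
exists (X :&: S); split.
- exact: subsetIr.
- exact: leq_trans (subset_leq_card (subsetIl X S)) Xk.
- exact: simpleIn_sub sub sX.
- exact: pi_or_tree_componentsS sub goodX.
Qed.

Lemma acyclicIn_cycle A D s : acyclicIn m A -> uniq s -> 2 < size s ->
  {subset s <= A} -> cycle (relIn D) s -> False.
Proof.
move=> aA us ss /allP sA cs; apply: aA; exists s; split => //.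
apply: (sub_in_cycle (P := [in A])) sA cs => y z yA zA /and3P[_ _ yz].
by rewrite /relIn /= yA zA.
Qed.

Lemma proper_intervalIn_claw_free K c a1 a2 a3 :
  proper_intervalIn K -> c \in K -> a1 \in K -> a2 \in K -> a3 \in K ->
  adj c a1 -> adj c a2 -> adj c a3 -> a1 != a2 -> a1 != a3 -> a2 != a3 ->
  ~~ adj a1 a2 -> ~~ adj a1 a3 -> ~~ adj a2 a3 -> False.
Proof.
move=> [_ [l [r [lr adjI nest]]]] cK a1K a2K a3K.
move=> ca1 ca2 ca3 a12 a13 a23 na12 na13 na23.
have meet a : a \in K -> adj c a -> (l c <= r a /\ l a <= r c)%R.
  by move=> aK ca; apply/(adjI c a cK aK (adj_neq ca)).
have apart a b : a \in K -> b \in K -> a != b -> ~~ adj a b ->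
    ~ (l a <= r b /\ l b <= r a)%R.
  by move=> aK bK ab nab /(adjI a b aK bK ab); apply/negP.
have [c1 a1c] := meet a1 a1K ca1.
have [c2 a2c] := meet a2 a2K ca2.
have [c3 a3c] := meet a3 a3K ca3.
exact: (interval_claw (lr a1 a1K) (lr a2 a2K) (lr a3 a3K) c1 a1c c2 a2c c3 a3c
  (apart a1 a2 a1K a2K a12 na12) (apart a1 a3 a1K a3K a13 na13)
  (apart a2 a3 a2K a3K a23 na23) (nest c a1 cK a1K) (nest c a2 cK a2K)
  (nest c a3 cK a3K)).
Qed.

Section PendantTree.
Variables (x : T) (C : {set T}).
Hypothesis Cpend : pendant_tree x C.

Lemma pendant_notin : x \notin C.
Proof.
case: Cpend => _ /and4P[/subsetP CS _ _ _] _ _.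
by apply/negP=> /CS; rewrite !inE eqxx.
Qed.

Lemma pendant_closed y z : y \in C -> adj y z -> z != x -> z \in C.
Proof.
case: Cpend => _ /component_closed cC _ _ yC yz zx.
by apply: (cC y z yC _ yz); rewrite !inE zx.
Qed.

Lemma pendant_simple y z : y \in C -> m y z <= 1.
Proof.
move=> yC; case: (posnP (m y z)) => [-> // | yz].
case: Cpend => _ _ _ [_ sxC _ _]; apply: sxC; first by rewrite !inE yC orbT.
have [-> | zx] := eqVneq z x; first exact: setU11.
by rewrite !inE (pendant_closed yC yz zx) orbT.
Qed.

Lemma pendant_neighbour : exists2 a, a \in C & adj x a.
Proof.
case: Cpend => _ _ [/set0Pn[c cC] _ _ _] [_ _ /forall_inP conxC _].
have /forall_inP/(_ c) := conxC x (setU11 x C).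
rewrite !inE cC orbT => /(_ isT) /connectP[[|a p] /= xp cx].
  by move: pendant_notin; rewrite -cx cC.
case/andP: xp => /and3P[_ aC xa] _; exists a => //.
by move: aC; rewrite !inE eq_sym (negbTE (adj_neq xa)).
Qed.

Lemma connected_pendant_tree D v : connectedIn D -> x \notin D ->
  v \in D -> v \in C -> treeIn D.
Proof.
move=> cD xD vD vC; case: Cpend => _ cC tC _.
have DS : D \subset [set: T] :\ x.
  by apply/subsetP=> w wD; rewrite !inE andbT; apply: contraNneq xD => <-.
apply: treeIn_sub tC (connected_sub_closed DS (component_closed cC) cD vD vC) _ cD.
by apply/set0Pn; exists v.
Qed.

Lemma pendant_path_sub D a p c : path (relIn D) a p -> x \notin a :: p ->
  c \in a :: p -> c \in C -> {subset a :: p <= C}.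
Proof.
move=> ap xp cp cC; case: Cpend => _ compC _ _.
pose e := relIn ([set: T] :\ x).
have ap' : path e a p.
  have ax : all (predC1 x) (a :: p).
    by apply/allP=> y yp /=; apply: contraNneq xp => <-.
  apply: (sub_in_path (P := predC1 x)) ax ap.
  move=> y z /[!inE] yx zx /and3P[_ _ yz].
  by rewrite /e /relIn /= !inE yx zx.
have ca : connect e c a.
  by rewrite (sym_connect_sym (relInC _)) (path_connect ap' cp).
move=> v /(path_connect ap') av.
exact: connect_closed (subxx _) (component_closed compC) cC (connect_trans ca av).
Qed.

Lemma pendant_cycle_sub D s c : uniq s -> cycle (relIn D) s -> c \in s ->
  c \in C -> {subset s <= x |: C}.
Proof.
move=> us cs cs' cC.
have sub a p : path (relIn D) a p -> x \notin a :: p -> c \in a :: p ->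
    {subset a :: p <= x |: C}.
  by move=> ap xp cp v /(pendant_path_sub ap xp cp cC) vC; rewrite !inE vC orbT.
have [xs | xNs] := boolP (x \in s); last first.
  case: s us cs cs' xNs => // a p _; rewrite (cycle_path x) => /andP[_ ap] cp xp.
  exact: sub ap xp cp.
case: (rot_to xs) => i p E.
have ms : s =i x :: p by move=> v; rewrite -E mem_rot.
have uxp : uniq (x :: p) by rewrite -E rot_uniq.
have cxp : cycle (relIn D) (x :: p) by rewrite -E rot_cycle.
move=> v; rewrite ms inE => /orP[/eqP -> | vp]; first exact: setU11.
case: p {E} ms uxp cxp vp => // a p ms /andP[xap _].
rewrite (cycle_path x) => /and3P[_ _ ap] vp.
apply: sub ap xap _ v vp.
move: cs'; rewrite ms inE => /orP[/eqP cx | //].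
by move: pendant_notin; rewrite -cx cC.
Qed.

End PendantTree.

Lemma pendant_tree_eq x C1 C2 v : pendant_tree x C1 -> pendant_tree x C2 ->
  v \in C1 -> v \in C2 -> C1 = C2.
Proof. by move=> [_ c1 _ _] [_ c2 _ _]; apply: component_eq c1 c2. Qed.

Lemma pendant_tree_nonadj x C1 C2 a b : pendant_tree x C1 -> pendant_tree x C2 ->
  C1 != C2 -> a \in C1 -> b \in C2 -> ~~ adj a b.
Proof.
move=> p1 p2 C12 aC1 bC2; apply/negP=> ab.
have bx : b != x by apply: contraNneq (pendant_notin p2) => <-.
by rewrite (pendant_tree_eq p1 p2 (pendant_closed p1 aC1 ab bx) bC2) eqxx in C12.
Qed.

Lemma pendant_claw_not_proper_interval x C1 C2 C3 K :
  pendant_tree x C1 -> pendant_tree x C2 -> pendant_tree x C3 ->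
  C1 != C2 -> C1 != C3 -> C2 != C3 ->
  x |: C1 \subset K -> x |: C2 \subset K -> x |: C3 \subset K ->
  ~ proper_intervalIn K.
Proof.
move=> p1 p2 p3 C12 C13 C23 /subsetP s1 /subsetP s2 /subsetP s3 piK.
have [a1 a1C xa1] := pendant_neighbour p1.
have [a2 a2C xa2] := pendant_neighbour p2.
have [a3 a3C xa3] := pendant_neighbour p3.
have inK Ci (sCi : {subset x |: Ci <= K}) a : a \in Ci -> a \in K.
  by move=> aC; apply: sCi; rewrite !inE aC orbT.
have neq Ci Cj ai aj : pendant_tree x Ci -> pendant_tree x Cj -> Ci != Cj ->
    ai \in Ci -> aj \in Cj -> ai != aj.
  move=> pi pj Cij aiC ajC; apply: contra_neq Cij => eij.
  by apply: pendant_tree_eq pi pj aiC _; rewrite eij.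
apply: (proper_intervalIn_claw_free piK (s1 x (setU11 x C1)) (inK _ s1 a1 a1C)
  (inK _ s2 a2 a2C) (inK _ s3 a3 a3C) xa1 xa2 xa3).
- exact: neq p1 p2 C12 a1C a2C.
- exact: neq p1 p3 C13 a1C a3C.
- exact: neq p2 p3 C23 a2C a3C.
- exact: pendant_tree_nonadj p1 p2 C12 a1C a2C.
- exact: pendant_tree_nonadj p1 p3 C13 a1C a3C.
- exact: pendant_tree_nonadj p2 p3 C23 a2C a3C.
Qed.

Definition pendant_union x U :=
  forall v, v \in U -> exists C, [/\ pendant_tree x C, v \in C & C \subset U].

Section Cover.
Variables (x : T) (U S X Y : {set T}).
Hypothesis Upend : pendant_union x U.
Hypothesis SXsimple : simpleIn (S :\: X).
Hypothesis SXgood : pi_or_tree_components (S :\: X).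
Hypothesis Ycover : forall v, v \notin Y -> (v \in U) || (v \in S :\: X).

Lemma simpleIn_cover : simpleIn ([set: T] :\: Y).
Proof.
move=> y z /[!inE] /[!andbT] yY zY.
case/orP: (Ycover yY) => [/Upend[C [pC yC _]] | yS].
  exact: (pendant_simple pC z yC).
case/orP: (Ycover zY) => [/Upend[C [pC zC _]] | zS]; last exact: SXsimple.
by rewrite msym; exact: (pendant_simple pC y zC).
Qed.

Lemma component_cover D : component ([set: T] :\: Y) D -> x \notin D ->
  proper_intervalIn D \/ treeIn D.
Proof.
case/and4P=> /subsetP DY D0 cD _ xD.
have [DS | /subsetPn[v vD vS]] := boolP (D \subset S :\: X).
  exact: pi_or_tree_connected SXgood DS D0 cD.
have /Ycover : v \notin Y by have := DY v vD; rewrite !inE andbT.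
rewrite (negbTE vS) orbF => /Upend[C [pC vC _]].
by right; exact: (connected_pendant_tree pC cD xD vD vC).
Qed.

End Cover.

Lemma card_setU1D_le a A B : (a \in A) || ~~ [disjoint A & B] ->
  #|a |: (A :\: B)| <= #|A|.
Proof.
case/orP=> [aA | ].
  by apply: subset_leq_card; rewrite subUset sub1set aA subsetDl.
rewrite disjoints_subset => /subsetPn[b bA]; rewrite inE negbK => bB.
rewrite cardsU1 (cardsD1 b A) bA; apply: leq_add (leq_b1 _) (subset_leq_card _).
by rewrite setDS ?sub1set.
Qed.

Section RemovePendantUnion.
Variables (x : T) (Z C1 C2 C3 : {set T}) (k : nat).
Hypothesis Zpend : pendant_union x Z.
Hypotheses (p1 : pendant_tree x C1) (p2 : pendant_tree x C2).
Hypothesis p3 : pendant_tree x C3.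
Hypotheses (C12 : C1 != C2) (C13 : C1 != C3) (C23 : C2 != C3).
Hypotheses (C1Z : [disjoint C1 & Z]) (C2Z : [disjoint C2 & Z]).
Hypothesis C3Z : [disjoint C3 & Z].
Let W := C1 :|: (C2 :|: C3).

Let C1W : C1 \subset W. Proof. exact: subsetUl. Qed.
Let C2W : C2 \subset W.
Proof. exact: subset_trans (subsetUl C2 C3) (subsetUr C1 _). Qed.
Let C3W : C3 \subset W.
Proof. exact: subset_trans (subsetUr C2 C3) (subsetUr C1 _). Qed.

Let x_notin_Z : x \notin Z.
Proof.
by apply/negP=> /Zpend[C [pC xC _]]; rewrite (negbTE (pendant_notin pC)) in xC.
Qed.

Let pendant_unionZW : pendant_union x (Z :|: W).
Proof.
move=> v; rewrite !inE => /or4P[/Zpend[C [pC vC CZ]] | vC | vC | vC].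
- by exists C; split=> //; apply: subset_trans CZ (subsetUl _ _).
- by exists C1; split=> //; apply: subset_trans C1W (subsetUr _ _).
- by exists C2; split=> //; apply: subset_trans C2W (subsetUr _ _).
- by exists C3; split=> //; apply: subset_trans C3W (subsetUr _ _).
Qed.

Lemma root_component_sub X D K : component ([set: T] :\: X) D -> x \in D ->
  component ((~: Z) :\: X) K -> x \in K -> D \subset K :|: Z.
Proof.
case/and4P=> DS _ cD _ xD cK xK.
apply: connected_sub_closed DS _ cD xD _; last by rewrite inE xK.
move=> y z; rewrite !inE andbT => /orP[yK | yZ] zX yz.
  have [zZ | zNZ] := boolP (z \in Z); first by apply/orP; right.
  by rewrite (component_closed cK yK _ yz) // !inE zNZ zX.
have [C [pC yC CZ]] := Zpend yZ.
have [-> | zx] := eqVneq z x; first by rewrite xK.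
by rewrite (subsetP CZ _ (pendant_closed pC yC yz zx)) orbT.
Qed.

Section Solution.
Variable X : {set T}.
Hypotheses (Xk : #|X| <= k) (Xsimple : simpleIn ((~: Z) :\: X)).
Hypothesis Xgood : pi_or_tree_components ((~: Z) :\: X).

Let solution_cover v : v \notin X -> (v \in Z :|: W) || (v \in (~: Z) :\: X).
Proof. by rewrite !inE => ->; case: (v \in Z); rewrite ?orbT. Qed.

Lemma PITVD_add_root : (x \in X) || ~~ [disjoint X & W] -> PITVD m [set: T] k.
Proof.
move=> hit; pose Y := x |: (X :\: W).
have cover v : v \notin Y -> (v \in Z :|: W) || (v \in (~: Z) :\: X).
  rewrite !inE negb_or negb_and negbK => /andP[_].
  by case: (v \in Z); case: (v \in X); rewrite ?orbT.
have xY D : component ([set: T] :\: Y) D -> x \notin D.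
  by case/and4P=> /subsetP DY _ _ _; apply/negP=> /DY; rewrite !inE eqxx.
exists Y; split.
- exact: subsetT.
- exact: leq_trans (card_setU1D_le hit) Xk.
- exact: simpleIn_cover pendant_unionZW Xsimple cover.
- move=> D cD.
  exact: (component_cover pendant_unionZW Xgood cover cD (xY D cD)).
Qed.

Lemma root_component_offZ_tree : x \notin X -> [disjoint X & W] ->
  exists K, [/\ component ((~: Z) :\: X) K, x \in K & treeIn K].
Proof.
move=> xX XW.
have conx : connectedIn [set x].
  by apply/forall_inP=> u /set1P->; apply/forall_inP=> w /set1P->; apply: connect0.
have xS : [set x] \subset (~: Z) :\: X by rewrite sub1set !inE xX x_notin_Z.
have [K cK] := component_of_connected xS conx (set11 x); rewrite sub1set => xK.
have sK C : pendant_tree x C -> C \subset W -> [disjoint C & Z] ->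
    x |: C \subset K.
  move=> pC CW CZ; have [_ _ _ [_ _ conxC _]] := pC.
  apply: connected_sub_closed _ (component_closed cK) conxC (setU11 x C) xK.
  apply/subsetP=> v; rewrite !inE => /orP[/eqP-> | vC].
    by rewrite xX x_notin_Z.
  by rewrite (disjointFr CZ vC) (disjointFl XW (subsetP CW v vC)).
case: (Xgood cK) => [piK | tK]; last by exists K.
by case: (pendant_claw_not_proper_interval p1 p2 p3 C12 C13 C23
  (sK _ p1 C1W C1Z) (sK _ p2 C2W C2Z) (sK _ p3 C3W C3Z) piK).
Qed.

Lemma root_component_tree D : x \notin X -> [disjoint X & W] ->
  component ([set: T] :\: X) D -> x \in D -> treeIn D.
Proof.
move=> xX XW cD xD; have /and4P[DS D0 conD _] := cD.
have [K [cK xK [_ _ _ acK]]] := root_component_offZ_tree xX XW.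
have DKZ := root_component_sub cD xD cK xK.
split=> //.
  exact: simpleIn_sub DS (simpleIn_cover pendant_unionZW Xsimple solution_cover).
case=> s [us ss /allP sD cs].
have [/hasP[c cs' cZ] | /hasPn sNZ] := boolP (has [in Z] s).
  have [C [pC cC _]] := Zpend cZ; have [_ _ _ [_ _ _ acC]] := pC.
  exact: acyclicIn_cycle acC us ss (pendant_cycle_sub pC us cs cs' cC) cs.
apply: acyclicIn_cycle acK us ss _ cs => v vs.
by have := subsetP DKZ v (sD v vs); rewrite inE (negbTE (sNZ v vs)) orbF.
Qed.

Lemma PITVD_keep_solution : x \notin X -> [disjoint X & W] ->
  PITVD m [set: T] k.
Proof.
move=> xX XW; exists X; split.
- exact: subsetT.
- exact: Xk.
- exact: simpleIn_cover pendant_unionZW Xsimple solution_cover.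
- move=> D cD; have [xD | xND] := boolP (x \in D).
    by right; apply: root_component_tree cD xD.
  exact: (component_cover pendant_unionZW Xgood solution_cover cD xND).
Qed.

End Solution.

Lemma PITVD_remove_pendant_union : PITVD m (~: Z) k -> PITVD m [set: T] k.
Proof.
case=> X [_ Xk Xsimple Xgood].
have [hit | ] := boolP ((x \in X) || ~~ [disjoint X & W]).
  exact: (PITVD_add_root Xk Xsimple Xgood hit).
rewrite negb_or negbK => /andP[xX XW].
exact: (PITVD_keep_solution Xk Xsimple Xgood xX XW).
Qed.

End RemovePendantUnion.
End Graphs.

Theorem lemma21 (T : finType) (m : T -> T -> nat)
  (msym : forall y z, m y z = m z y) (mloop : forall y, m y y = 0)
  (k : nat) (x : T) (l : nat) (hl : 4 <= l) (C : 'I_l -> {set T})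
  (Cinj : injective C)
  (Cpend : forall j, pendant_tree m [set: T] x (C j)) :
  let Z := \bigcup_(j < l | 3 <= j) C j in
  PITVD m [set: T] k <-> PITVD m (~: Z) k.
Proof.
move=> Z; split; first exact: PITVD_sub (subsetT _).
have Zpend : pendant_union m x Z.
  by move=> v /bigcupP[j j3 vj]; exists (C j); split=> //; apply: bigcup_sup.
pose c n (n3 : n < 3) : 'I_l := Ordinal (leq_trans n3 (ltnW hl)).
have Cneq n1 n2 (n13 : n1 < 3) (n23 : n2 < 3) :
    n1 != n2 -> C (c n1 n13) != C (c n2 n23).
  by rewrite (inj_eq Cinj).
have CZ n (n3 : n < 3) : [disjoint C (c n n3) & Z].
  rewrite disjoints_subset; apply/subsetP=> v vC; rewrite inE.
  apply/bigcupP=> -[j j3 vj].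
  have /(congr1 val) /= nj := Cinj _ _ (pendant_tree_eq (Cpend _) (Cpend j) vC vj).
  by rewrite -nj leqNgt n3 in j3.
exact: (PITVD_remove_pendant_union msym mloop Zpend
  (Cpend (c 0 isT)) (Cpend (c 1 isT)) (Cpend (c 2 isT))
  (Cneq 0 1 isT isT isT) (Cneq 0 2 isT isT isT) (Cneq 1 2 isT isT isT)
  (CZ 0 isT) (CZ 1 isT) (CZ 2 isT)).
Qed.
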